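(* There exist a uniquely $4$-colourable plane triangulation $G'$, a set $\mathcal F$ of $24$ faces of $G'$, and a bijection $F\mapsto\phi_F$ between $\mathcal F$ and the $24$ proper colourings $V(G')\to\{1,2,3,4\}$ of $G'$, such that for every $F\in\mathcal F$, $\phi_F(V(F))=\{1,2,3\}$, where $V(F)$ is the set of vertices incident to $F$.
   Context: A graph is uniquely $4$-colourable if there is a unique partition of its vertex set into $4$ independent sets; such a graph has exactly $24$ proper colourings with colour set $\{1,2,3,4\}$. *)

(* Plane triangulations are encoded as planar (genus 0)
   combinatorial maps (hypermaps, in the style of the Four Colour Theorem
   formalisation): darts D, permutations edge/node/face with
   edge (node (face x)) = x; vertices = node orbits, edges = edge orbits,
   faces = face orbits. *)
From HB Require Import structures.
From mathcomp Require Import all_boot.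
Set Implicit Arguments. Unset Strict Implicit. Unset Printing Implicit Defensive.

Definition glink (D : finType) (e n f : D -> D) : rel D :=
  fun x y => [|| e x == y, n x == y | f x == y].

Record plane_triangulation (V D : finType) (vert : D -> V) (e n f : D -> D) : Prop :=
  PlaneTriangulation {
    pt_cancel3 : forall x, e (n (f x)) = x;
    pt_edge_inv : forall x, e (e x) = x;
    pt_edge_nofix : forall x, e x != x;
    pt_vert : forall x y, (vert x == vert y) = fconnect n x y;
    pt_vert_surj : forall v : V, exists x, vert x = v;
    pt_connected : forall x y, connect (glink e n f) x y;
    (* Euler formula, genus 0 with one component *)
    pt_euler : fcard e [set: D] + fcard n [set: D] + fcard f [set: D] = #|D| + 2;
    pt_triangular : forall x, order f x = 3;
    pt_noloop : forall x, vert x != vert (e x);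
    pt_nomulti : forall x y, vert x = vert y -> vert (e x) = vert (e y) -> x = y
  }.

Definition adj (V D : finType) (vert : D -> V) (e : D -> D) : rel V :=
  fun u v => [exists x, (vert x == u) && (vert (e x) == v)].

Definition independent (V : finType) (a : rel V) (B : {set V}) : bool :=
  [forall u in B, forall v in B, ~~ a u v].

Definition uniquely_4_colourable (V : finType) (a : rel V) : Prop :=
  exists! P : {set {set V}},
    [&& partition P [set: V], #|P| == 4 & [forall B in P, independent a B]].

(* colours 1,2,3,4 are represented by 0,1,2,3 : 'I_4 *)
Definition proper_colouring (V : finType) (a : rel V) (c : {ffun V -> 'I_4}) : bool :=
  [forall u, forall v, a u v ==> (c u != c v)].

Definition faces (D : finType) (f : D -> D) : {set {set D}} :=
  [set [set y | fconnect f x y] | x : D].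

(* The triangulation G' is explicit: 16 vertices and 28 triangular faces,
   given as a combinatorial map on 84 darts.  Its vertices 0..3 form a
   4-clique and every later vertex v is "stacked": it is adjacent to all
   three corners of a triangle that also dominates an earlier vertex, its
   twin.  With four colours available, twins always get the same colour
   (and lie in the same block of any partition into four independent sets),
   so every proper colouring, and every such partition, is determined by the
   colours of the clique.  Hence G' is uniquely 4-colourable, and its proper
   colourings are the 24 relabellings of one base colouring by the
   permutations of the four colours.  To the i-th permutation we attach a
   face avoiding the base colour that this permutation sends to colour 4;
   the face then sees exactly the colours 1,2,3. *)
From HB Require Import structures.
From mathcomp Require Import all_boot zify.
Set Implicit Arguments. Unset Strict Implicit. Unset Printing Implicit Defensive.

(* Closed-term computation over an ordinal type: [ord_list n] enumerates
   'I_n.+1 without going through the (non-computing) finType enumeration. *)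
Definition ord_of_nat (n i : nat) : 'I_n.+1 := Ordinal (ltn_pmod i (ltn0Sn n)).

Definition ord_list (n : nat) : seq 'I_n.+1 := [seq ord_of_nat n i | i <- iota 0 n.+1].

Lemma ord_of_natK (n : nat) (x : 'I_n.+1) : ord_of_nat n x = x.
Proof. by apply: val_inj; rewrite /= modn_small. Qed.

Lemma mem_ord_list (n : nat) (x : 'I_n.+1) : x \in ord_list n.
Proof.
rewrite /ord_list; apply/mapP; exists (val x); last by rewrite ord_of_natK.
by rewrite mem_iota add0n ltn_ord.
Qed.

Lemma all_ord_list (n : nat) (P : pred 'I_n.+1) : all P (ord_list n) -> forall x, P x.
Proof. by move=> /allP allP x; apply/allP/mem_ord_list. Qed.

Lemma all_ord_list2 (n m : nat) (P : 'I_n.+1 -> 'I_m.+1 -> bool) :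
  all (fun x => all (P x) (ord_list m)) (ord_list n) -> forall x y, P x y.
Proof. by move=> allP x; apply/all_ord_list/(all_ord_list allP). Qed.

Lemma order_traject (T : finType) (f : T -> T) (x : T) (n : nat) :
  0 < n -> uniq (traject f x n) -> iter n f x = x -> order f x = n.
Proof.
case: n => // n _ Uf fnx; rewrite -(size_traject f x n.+1).
apply: order_cycle => //; last by rewrite mem_head.
rewrite /cycle /=; have -> : rcons (traject f (f x) n) x = traject f (f x) n.+1.
  by rewrite trajectSr -iterSr fnx.
exact: fpath_traject.
Qed.

Lemma fcard_vertex_classes (D V : finType) (f : D -> D) (vert : D -> V) :
  injective f -> (forall x y, (vert x == vert y) = fconnect f x y) ->
  (forall v, exists x, vert x = v) -> fcard f [set: D] = #|V|.
Proof.
move=> finj vertE vert_onto; have fsym : connect_sym (frel f) := fconnect_sym finj.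
rewrite /n_comp_mem (eq_card (B := [set x | froots f x])) => [|x]; last first.
  by rewrite !inE andbT.
rewrite -(card_in_imset (f := vert)) => [|x y]; last first.
  rewrite !inE => /eqP rx /eqP ry /eqP; rewrite vertE => /(rootP fsym).
  by rewrite rx ry.
suff -> : vert @: [set x | froots f x] = [set: V] by rewrite cardsT.
apply/setP => v; rewrite inE; have [x <-] := vert_onto v.
apply/imsetP; exists (froot f x); first by rewrite inE roots_root.
by apply/eqP; rewrite vertE connect_root.
Qed.

Lemma fcard_const_order (T : finType) (f : T -> T) (k : nat) :
  injective f -> (forall x, order f x = k) -> fcard f [set: T] * k = #|T|.
Proof.
move=> finj order_k; rewrite -cardsT; apply: fcard_order_set => //.
  by apply/subsetP => x _; rewrite inE order_k.
by move=> x y _; rewrite !inE.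
Qed.

Lemma glink_connect_sym (D : finType) (e n f : D -> D) :
  injective e -> injective n -> injective f -> connect_sym (glink e n f).
Proof.
move=> einj ninj finj.
exact: relU_sym (fconnect_sym einj) (relU_sym (fconnect_sym ninj) (fconnect_sym finj)).
Qed.

(* Depth-first search with an explicit bound: a certificate of reachability
   that can be evaluated by computation. *)
Lemma dfs_connect (T : finType) (g : T -> seq T) (n : nat) (x y : T) :
  #|T| <= n -> y \in dfs g n [::] x -> connect (grel g) x y.
Proof.
move=> leTn y_dfs; have [p g_p -> _] : dfs_path g [::] x y.
  by apply/(@dfs_pathP T g n); rewrite ?card0.
by apply/connectP; exists p.
Qed.

Section Twins.

Variables (W : finType) (a : rel W).

Lemma proper_colouringP (c : {ffun W -> 'I_4}) :
  reflect (forall u v, a u v -> c u != c v) (proper_colouring a c).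
Proof.
apply: (iffP forallP) => [c_ok u v | c_ok u]; first by move/forallP/(_ v)/implyP: (c_ok u).
by apply/forallP => v; apply/implyP/c_ok.
Qed.

Lemma independentP (B : {set W}) :
  reflect (forall u v, u \in B -> v \in B -> ~~ a u v) (independent a B).
Proof.
apply: (iffP forall_inP) => [B_ok u v Bu Bv | B_ok u Bu].
  by move/forall_inP/(_ v Bv): (B_ok u Bu).
by apply/forall_inP => v; apply: B_ok.
Qed.

Definition on_triangle (x1 x2 x3 y : W) : bool :=
  [&& a x1 x2, a x1 x3, a x2 x3, a x1 y & a x2 y && a x3 y].

(* Twins are two vertices adjacent to all corners of a common triangle;
   with only four colours available they must receive the same colour. *)
Definition twins (y z : W) : Prop :=
  exists x1 x2 x3, on_triangle x1 x2 x3 y && on_triangle x1 x2 x3 z.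

(* The common core of the colouring and the partition arguments: a map h
   into a 4-element set that separates adjacent vertices identifies twins. *)
Lemma twins_same_class (X : finType) (R : {set X}) (h : W -> X) :
  #|R| = 4 -> (forall w, h w \in R) -> (forall u v, a u v -> h u != h v) ->
  forall y z, twins y z -> h y = h z.
Proof.
move=> cardR hR h_sep y z [x1 [x2 [x3 /andP[]]]].
case/and5P=> a12 a13 a23 a1y /andP[a2y a3y]; case/and5P=> _ _ _ a1z /andP[a2z a3z].
have SR : h x1 |: (h x2 |: (h x3 |: [set h y])) = R.
  apply/eqP; rewrite eqEcard cardR; apply/andP; split.
    by apply/subsetP => k; rewrite !inE => /or4P[] /eqP ->.
  rewrite !cardsU1 cards1 !inE !negb_or (h_sep _ _ a12) (h_sep _ _ a13).
  by rewrite (h_sep _ _ a1y) (h_sep _ _ a23) (h_sep _ _ a2y) (h_sep _ _ a3y).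
move: (hR z); rewrite -SR !inE => /or4P[] /eqP hz //.
- by move: (h_sep _ _ a1z); rewrite hz eqxx.
- by move: (h_sep _ _ a2z); rewrite hz eqxx.
- by move: (h_sep _ _ a3z); rewrite hz eqxx.
Qed.

Lemma twins_same_colour (c : {ffun W -> 'I_4}) (y z : W) :
  proper_colouring a c -> twins y z -> c y = c z.
Proof.
move/proper_colouringP=> c_ok; apply: (twins_same_class (R := [set: 'I_4])) => //.
by rewrite cardsT card_ord.
Qed.

Lemma partition_separates (P : {set {set W}}) (u v : W) :
  partition P [set: W] -> (forall B, B \in P -> independent a B) ->
  a u v -> pblock P u != pblock P v.
Proof.
case/and3P=> /eqP coverP _ _ P_indep a_uv; apply/negP => /eqP same_block.
have Pu : u \in cover P by rewrite coverP inE.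
have Pv : v \in cover P by rewrite coverP inE.
move/independentP: (P_indep _ (pblock_mem Pu)) => /(_ u v).
by rewrite mem_pblock Pu same_block mem_pblock Pv a_uv => /(_ isT isT).
Qed.

Lemma twins_same_block (P : {set {set W}}) (y z : W) :
  partition P [set: W] -> #|P| = 4 -> (forall B, B \in P -> independent a B) ->
  twins y z -> pblock P y = pblock P z.
Proof.
move=> partP cardP P_indep; apply: (twins_same_class cardP).
  by move=> w; apply: pblock_mem; case/and3P: partP => /eqP -> _ _; rewrite inE.
by move=> u v; apply: partition_separates.
Qed.

End Twins.

(* Twins for a smaller adjacency relation are twins for a larger one; this
   lets a computable adjacency certify twins. *)
Lemma on_triangle_sub (W : finType) (a a' : rel W) (x1 x2 x3 y : W) :
  subrel a' a -> on_triangle a' x1 x2 x3 y -> on_triangle a x1 x2 x3 y.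
Proof.
move=> sub; rewrite /on_triangle.
by case/and5P=> /sub-> /sub-> /sub-> /sub-> /andP[/sub-> /sub->].
Qed.

Section StackedColouring.

Variables (W : finType) (a : rel W) (base : W -> 'I_4) (corner : 'I_4 -> W).
Variable rank : W -> nat.
Hypothesis base_proper : forall u v, a u v -> base u != base v.
Hypothesis base_corner : forall k, base (corner k) = k.
Hypothesis corner_adj : forall k l, k != l -> a (corner k) (corner l).
Hypothesis stacked : forall v, corner (base v) = v \/
  exists w, [/\ rank w < rank v, base w = base v & twins a v w].

Lemma stacked_forced (T : Type) (h : W -> T) :
  (forall y z, twins a y z -> h y = h z) -> forall v, h v = h (corner (base v)).
Proof.
move=> h_twins; suff forced_below m v : rank v < m -> h v = h (corner (base v)).
  by move=> v; apply: (forced_below (rank v).+1).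
elim: m v => // m IHm v lt_vm.
have [-> // | [w [lt_wv base_wv twin_vw]]] := stacked v.
by rewrite (h_twins _ _ twin_vw) (IHm w) ?base_wv // (leq_trans lt_wv).
Qed.

Definition recolour (s : 'I_4 -> 'I_4) : {ffun W -> 'I_4} := [ffun v => s (base v)].

Lemma recolour_proper (s : 'I_4 -> 'I_4) :
  injective s -> proper_colouring a (recolour s).
Proof.
by move=> s_inj; apply/proper_colouringP => u v /base_proper; rewrite !ffunE (inj_eq s_inj).
Qed.

Lemma recolour_inj (s t : 'I_4 -> 'I_4) : recolour s = recolour t -> s =1 t.
Proof. by move=> st k; move/ffunP/(_ (corner k)): st; rewrite !ffunE base_corner. Qed.

Lemma proper_corner_inj (c : {ffun W -> 'I_4}) :
  proper_colouring a c -> injective (fun k => c (corner k)).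
Proof.
move/proper_colouringP=> c_ok k l; apply: contra_eq => neq_kl.
exact/c_ok/corner_adj.
Qed.

Lemma proper_recolourE (c : {ffun W -> 'I_4}) :
  proper_colouring a c -> c = recolour (fun k => c (corner k)).
Proof.
move=> c_ok; apply/ffunP => v; rewrite ffunE.
by apply: stacked_forced => y z; apply: twins_same_colour.
Qed.

Definition four_partition (P : {set {set W}}) : bool :=
  [&& partition P [set: W], #|P| == 4 & [forall B in P, independent a B]].

Definition base_partition : {set {set W}} := preim_partition base [set: W].

Lemma four_partition_blocks (P : {set {set W}}) (x y : W) :
  four_partition P -> (pblock P x == pblock P y) = (base x == base y).
Proof.
case/and3P=> partP /eqP cardP /forall_inP P_indep.
have forced v : pblock P v = pblock P (corner (base v)).
  by apply: stacked_forced => y' z'; apply: twins_same_block.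
rewrite forced [pblock P y]forced; have [-> | neq_xy] := eqVneq (base x) (base y).
  by rewrite eqxx.
by apply/negbTE/(partition_separates partP P_indep)/corner_adj.
Qed.

Lemma four_partition_unique (P : {set {set W}}) :
  four_partition P -> P = base_partition.
Proof.
move=> P_ok; have partP : partition P [set: W] by case/and3P: P_ok.
rewrite -(preim_partition_pblock partP); apply: eq_imset => x.
by apply/setP => y; rewrite !inE four_partition_blocks.
Qed.

Lemma base_partitionE :
  base_partition = [set [set y in [set: W] | k == base y] | k : 'I_4].
Proof.
apply/setP => B; apply/imsetP/imsetP => [[x _ ->] | [k _ ->]].
  by exists (base x).
by exists (corner k); rewrite ?base_corner.
Qed.

Lemma base_partition_ok : four_partition base_partition.
Proof.
apply/and3P; split; first exact: preim_partitionP.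
  rewrite base_partitionE card_imset ?card_ord // => k l same_class.
  have : corner l \in [set y in [set: W] | l == base y] by rewrite !inE base_corner eqxx.
  by rewrite -same_class !inE base_corner => /eqP.
apply/forall_inP => _ /imsetP[x _ ->]; apply/independentP => u v.
rewrite !inE => /eqP base_u /eqP base_v; apply/negP => /base_proper.
by rewrite -base_u -base_v eqxx.
Qed.

Lemma stacked_uniquely_4_colourable : uniquely_4_colourable a.
Proof.
exists base_partition; split; first exact: base_partition_ok.
by move=> P /four_partition_unique ->.
Qed.

End StackedColouring.

Section Arrangements.

Variable n : nat.

Definition arrangement (i : nat) : seq nat := nth [::] (permutations (iota 0 n.+1)) i.

Definition arrangement_fun (i : nat) (k : 'I_n.+1) : 'I_n.+1 :=
  ord_of_nat n (nth 0 (arrangement i) k).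

Lemma size_all_arrangements : size (permutations (iota 0 n.+1)) = n.+1`!.
Proof. by rewrite size_permutations ?iota_uniq ?size_iota. Qed.

Lemma arrangement_perm (i : nat) : i < n.+1`! -> perm_eq (arrangement i) (iota 0 n.+1).
Proof. by move=> lt_i; rewrite -mem_permutations mem_nth ?size_all_arrangements. Qed.

Lemma arrangement_fun_val (i : nat) (k : 'I_n.+1) :
  i < n.+1`! -> val (arrangement_fun i k) = nth 0 (arrangement i) k.
Proof.
move=> lt_i; have perm_i := arrangement_perm lt_i.
rewrite /= modn_small // -[_ < _](mem_iota 0) -(perm_mem perm_i) mem_nth //.
by rewrite (perm_size perm_i) size_iota.
Qed.

Lemma arrangement_fun_inj (i : nat) : i < n.+1`! -> injective (arrangement_fun i).
Proof.
move=> lt_i k l /(congr1 val); rewrite !arrangement_fun_val // => /eqP.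
have perm_i := arrangement_perm lt_i.
rewrite nth_uniq ?(perm_size perm_i) ?size_iota ?(perm_uniq perm_i) ?iota_uniq //.
by move/eqP/val_inj.
Qed.

Lemma arrangement_fun_eq (i j : nat) : i < n.+1`! -> j < n.+1`! ->
  arrangement_fun i =1 arrangement_fun j -> i = j.
Proof.
move=> lt_i lt_j same_fun; apply/eqP.
rewrite -(@nth_uniq _ [::] (permutations (iota 0 n.+1)) i j)
  ?size_all_arrangements ?permutations_uniq //.
have [perm_i perm_j] := (arrangement_perm lt_i, arrangement_perm lt_j).
apply/eqP/(eq_from_nth (x0 := 0)) => [|k].
  by rewrite (perm_size perm_i) (perm_size perm_j).
rewrite (perm_size perm_i) size_iota => lt_k.
by have := same_fun (Ordinal lt_k); move/(congr1 val); rewrite !arrangement_fun_val.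
Qed.

Lemma arrangement_fun_onto (s : 'I_n.+1 -> 'I_n.+1) :
  injective s -> exists2 i, i < n.+1`! & arrangement_fun i =1 s.
Proof.
move=> s_inj; set t := [seq val (s (ord_of_nat n k)) | k <- iota 0 n.+1].
have size_t : size t = n.+1 by rewrite size_map size_iota.
have perm_t : perm_eq t (iota 0 n.+1).
  have t_uniq : uniq t.
    rewrite map_inj_in_uniq ?iota_uniq // => k l; rewrite !mem_iota !add0n => lt_k lt_l.
    by move/val_inj/s_inj/(congr1 val); rewrite /= !modn_small.
  have t_sub : {subset t <= iota 0 n.+1}.
    by move=> _ /mapP[k _ ->]; rewrite mem_iota ltn_ord.
  have [_ eq_t] := uniq_min_size t_uniq t_sub (eq_leq (etrans (size_iota 0 _) (esym size_t))).
  by apply: uniq_perm; rewrite ?iota_uniq.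
exists (index t (permutations (iota 0 n.+1))).
  by rewrite -size_all_arrangements index_mem mem_permutations.
move=> k; apply: val_inj; rewrite /arrangement_fun /arrangement nth_index.
  by rewrite (nth_map 0) ?size_iota // nth_iota // add0n ord_of_natK /= modn_small.
by rewrite -mem_permutations in perm_t.
Qed.

Lemma arrangement_fun_index (i : nat) :
  i < n.+1`! -> arrangement_fun i (ord_of_nat n (index n (arrangement i))) = ord_max.
Proof.
move=> lt_i; have perm_i := arrangement_perm lt_i.
have n_in : n \in arrangement i by rewrite (perm_mem perm_i) mem_iota add0n ltnSn.
apply: val_inj; rewrite arrangement_fun_val //= modn_small ?nth_index //.
by rewrite -(size_iota 0 n.+1) -(perm_size perm_i) index_mem.
Qed.

End Arrangements.
Arguments arrangement_fun : clear implicits.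

Lemma imset_setC1 (T : finType) (s : T -> T) (m : T) :
  injective s -> s @: (~: [set m]) = ~: [set s m].
Proof.
move=> s_inj; apply/eqP; rewrite eqEcard card_imset // !cardsC1 leqnn andbT.
by apply/subsetP => _ /imsetP[x + ->]; rewrite !inE (inj_eq s_inj).
Qed.

Lemma set_uniq_setC1 (n : nat) (m : 'I_n.+1) (t : seq 'I_n.+1) :
  uniq (m :: t) -> size t = n -> [set k in t] = ~: [set m].
Proof.
case/andP=> m_notin t_uniq size_t; apply/eqP; rewrite eqEcard cardsC1 card_ord /=.
rewrite cardsE (card_uniqP t_uniq) size_t leqnn andbT.
by apply/subsetP => k; rewrite !inE; apply: contraTneq => ->.
Qed.

(* The triangulation G': 16 vertices and 84 darts; darts 3j, 3j+1, 3j+2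
   run around face j, [vertex_table] gives the vertex of each dart and
   [edge_table] the opposite dart of its edge. *)
Notation vertex := 'I_16.
Notation dart := 'I_84.

Definition vertex_table : seq nat :=
  [:: 0; 2; 13; 2; 1; 13; 1; 0; 13; 0; 1; 14; 1; 10; 14; 10; 0; 14; 1; 3; 10; 3;
     0; 10; 0; 3; 11; 3; 5; 11; 5; 0; 15; 0; 11; 15; 11; 5; 15; 3; 2; 9; 2; 8; 9;
     8; 3; 12; 3; 9; 12; 9; 8; 12; 2; 7; 8; 7; 3; 8; 2; 6; 7; 6; 3; 7; 2; 5; 6;
     5; 3; 6; 2; 0; 5; 1; 2; 4; 2; 3; 4; 3; 1; 4].
Definition edge_table : seq nat :=
  [:: 72; 5; 7; 75; 8; 1; 9; 2; 4; 6; 14; 16; 20; 17; 10; 22; 11; 13; 81; 23; 12;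
     24; 15; 19; 21; 29; 33; 69; 36; 25; 73; 35; 37; 26; 38; 31; 28; 32; 34; 78;
     44; 48; 56; 51; 40; 58; 50; 52; 41; 53; 46; 43; 47; 49; 62; 59; 42; 64; 45;
     55; 68; 65; 54; 70; 57; 61; 74; 71; 60; 27; 63; 67; 0; 30; 66; 3; 80; 82;
     39; 83; 76; 18; 77; 79].

Definition gvert (x : dart) : vertex := ord_of_nat 15 (nth 0 vertex_table x).
Definition gedge (x : dart) : dart := ord_of_nat 83 (nth 0 edge_table x).
Definition gface (x : dart) : dart := ord_of_nat 83 (x - x %% 3 + (x %% 3).+1 %% 3).
Definition gnode (x : dart) : dart := gedge (gface (gface x)).

Definition dart_ok (x : dart) : bool :=
  [&& gedge (gedge x) == x, gedge x != x, gvert x != gvert (gedge x),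
      iter 3 gface x == x, uniq (traject gface x 3) & gvert (gnode x) == gvert x].

Lemma dart_okP : forall x, dart_ok x.
Proof. by apply: all_ord_list; vm_compute. Qed.

Lemma gedgeK : involutive gedge.
Proof. by move=> x; case/and5P: (dart_okP x) => /eqP. Qed.

Lemma gedge_nofix (x : dart) : gedge x != x.
Proof. by case/and5P: (dart_okP x). Qed.

Lemma gedge_noloop (x : dart) : gvert x != gvert (gedge x).
Proof. by case/and5P: (dart_okP x). Qed.

Lemma gface3 (x : dart) : iter 3 gface x = x.
Proof. by case/and5P: (dart_okP x) => _ _ _ /eqP. Qed.

Lemma gvert_gnode (x : dart) : gvert (gnode x) = gvert x.
Proof. by case/and5P: (dart_okP x) => _ _ _ _ /andP[_ /eqP]. Qed.

Lemma gedge_inj : injective gedge. Proof. exact: inv_inj gedgeK. Qed.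

Lemma gface_inj : injective gface.
Proof. exact: (can_inj (g := fun x => gface (gface x))) gface3. Qed.

Lemma gnode_inj : injective gnode.
Proof. by move=> x y /gedge_inj /gface_inj /gface_inj. Qed.

Lemma gnode_face_edge (x : dart) : gedge (gnode (gface x)) = x.
Proof. by rewrite /gnode -[gface (gface (gface x))]/(iter 3 gface x) gface3 gedgeK. Qed.

Lemma order_gface (x : dart) : order gface x = 3.
Proof. by case/and5P: (dart_okP x) => _ _ _ /eqP x3 /andP[ux _]; apply: order_traject. Qed.

Lemma order_gedge (x : dart) : order gedge x = 2.
Proof. by apply: order_traject; rewrite //= ?gedgeK // inE eq_sym gedge_nofix. Qed.

Lemma gvert_no_multi (x y : dart) :
  gvert x = gvert y -> gvert (gedge x) = gvert (gedge y) -> x = y.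
Proof.
have no_multi : forall x y : dart,
    (gvert x == gvert y) ==> (gvert (gedge x) == gvert (gedge y)) ==> (x == y).
  by apply: all_ord_list2; vm_compute.
by move=> /eqP xy /eqP exy; move: (no_multi x y); rewrite xy exy => /eqP.
Qed.

Lemma gvert_orbit (x y : dart) : (gvert x == gvert y) = fconnect gnode x y.
Proof.
have in_orbit : forall x y : dart, (gvert x == gvert y) ==> (y \in traject gnode x 16).
  by apply: all_ord_list2; vm_compute.
apply/idP/idP => [/(implyP (in_orbit x y)) /trajectP[i _ ->] | conn].
  exact: fconnect_iter.
by apply/eqP/(fconnect_invariant _ conn) => z; rewrite /= gvert_gnode eqxx.
Qed.

Lemma gvert_onto (v : vertex) : exists x, gvert x = v.
Proof.
have hit : forall v : vertex, has (fun x => gvert x == v) (ord_list 83).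
  by apply: all_ord_list; vm_compute.
by have /hasP[x _ /eqP <-] := hit v; exists x.
Qed.

Definition gsucc (x : dart) : seq dart := [:: gedge x; gnode x; gface x].

Lemma gconnected (x y : dart) : connect (glink gedge gnode gface) x y.
Proof.
have reach : forall y : dart, connect (grel gsucc) ord0 y.
  move=> z; apply: (dfs_connect (n := 84)); first by rewrite card_ord.
  by move: z; apply: all_ord_list; vm_compute.
have sub : subrel (grel gsucc) (connect (glink gedge gnode gface)).
  by move=> u w; rewrite /= !inE => w_succ; apply: connect1; rewrite /glink -!(eq_sym w).
have from0 z : connect (glink gedge gnode gface) ord0 z := connect_sub sub (reach z).
apply: connect_trans _ (from0 y).
by rewrite (glink_connect_sym gedge_inj gnode_inj gface_inj); apply: from0.
Qed.

Lemma gtriangulation : plane_triangulation gvert gedge gnode gface.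
Proof.
split; [exact: gnode_face_edge | exact: gedgeK | exact: gedge_nofix
       | exact: gvert_orbit | exact: gvert_onto | exact: gconnected | | exact: order_gface
       | exact: gedge_noloop | exact: gvert_no_multi].
have edges := fcard_const_order gedge_inj order_gedge.
have faces := fcard_const_order gface_inj order_gface.
rewrite (fcard_vertex_classes gnode_inj gvert_orbit gvert_onto) !card_ord in edges faces *.
lia.
Qed.

Notation gadj := (adj gvert gedge).

Definition gadjb (u v : vertex) : bool :=
  has (fun x => (gvert x == u) && (gvert (gedge x) == v)) (ord_list 83).

Lemma gadjbP : subrel gadjb gadj.
Proof. by move=> u v /hasP[x _ uv]; apply/existsP; exists x. Qed.

Definition colour_table : seq nat := [:: 0; 1; 2; 3; 0; 1; 0; 1; 0; 1; 2; 2; 2; 3; 3; 3].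

(* The base colouring, and the certificate that G' is stacked: vertices
   0..3 form a clique, and every later vertex v is adjacent to the triangle
   given by [tri1_table], [tri2_table], [tri3_table], as is its earlier twin
   given by [twin_table]. *)
Definition tri1_table : seq nat := [:: 0; 0; 0; 0; 1; 0; 3; 3; 3; 3; 0; 0; 8; 0; 0; 5].
Definition tri2_table : seq nat := [:: 0; 0; 0; 0; 2; 3; 2; 2; 2; 2; 1; 3; 3; 2; 1; 0].
Definition tri3_table : seq nat := [:: 0; 0; 0; 0; 3; 2; 5; 6; 7; 8; 3; 5; 9; 1; 10; 11].
Definition twin_table : seq nat := [:: 0; 0; 0; 0; 0; 1; 0; 5; 6; 7; 2; 2; 2; 3; 3; 3].

Definition base_colour (v : vertex) : 'I_4 := ord_of_nat 3 (nth 0 colour_table v).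
Definition clique_vertex (k : 'I_4) : vertex := ord_of_nat 15 k.
Definition table_vertex (t : seq nat) (v : vertex) : vertex := ord_of_nat 15 (nth 0 t v).

Definition stacked_certificate (v : vertex) : bool :=
  let x1 := table_vertex tri1_table v in let x2 := table_vertex tri2_table v in
  let x3 := table_vertex tri3_table v in let w := table_vertex twin_table v in
  (clique_vertex (base_colour v) == v) ||
  [&& w < v, base_colour w == base_colour v,
      on_triangle gadjb x1 x2 x3 v & on_triangle gadjb x1 x2 x3 w].

Lemma base_colour_proper (u v : vertex) : gadj u v -> base_colour u != base_colour v.
Proof.
have dart_proper : forall x, base_colour (gvert x) != base_colour (gvert (gedge x)).
  by apply: all_ord_list; vm_compute.
by case/existsP=> x /andP[/eqP <- /eqP <-].
Qed.

Lemma base_colour_clique (k : 'I_4) : base_colour (clique_vertex k) = k.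
Proof. by apply/eqP; move: k; apply: all_ord_list; vm_compute. Qed.

Lemma clique_adj (k l : 'I_4) : k != l -> gadj (clique_vertex k) (clique_vertex l).
Proof.
have clique : forall k l : 'I_4, (k != l) ==> gadjb (clique_vertex k) (clique_vertex l).
  by apply: all_ord_list2; vm_compute.
by move=> neq_kl; apply/gadjbP/(implyP (clique k l)).
Qed.

Lemma gstacked (v : vertex) : clique_vertex (base_colour v) = v \/
  exists w : vertex, [/\ w < v, base_colour w = base_colour v & twins gadj v w].
Proof.
have certified : forall v, stacked_certificate v by apply: all_ord_list; vm_compute.
case/orP: (certified v) => [/eqP-> | /and4P[lt_wv /eqP same_colour tri_v tri_w]].
  by left.
right; exists (table_vertex twin_table v); split=> //.
exists (table_vertex tri1_table v), (table_vertex tri2_table v), (table_vertex tri3_table v).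
by rewrite !(on_triangle_sub gadjbP).
Qed.

Lemma guniquely_4_colourable : uniquely_4_colourable gadj.
Proof.
exact: stacked_uniquely_4_colourable base_colour_proper base_colour_clique clique_adj gstacked.
Qed.

Definition face (x : dart) : {set dart} := [set y | fconnect gface x y].

Lemma mem_face (x y : dart) : (y \in face x) = (y \in traject gface x 3).
Proof. by rewrite inE fconnect_orbit /orbit order_gface. Qed.

(* The face of dart [face_dart i] receives the colours {0,1,2} under the
   i-th relabelling of the base colouring: it avoids the base colour that
   this relabelling sends to 3. *)
Definition face_table : seq nat :=
  [:: 42; 51; 54; 60; 66; 72; 0; 3; 15; 12; 6; 9;
      18; 21; 30; 57; 27; 24; 63; 69; 36; 33; 45; 39].

Definition face_dart (i : 'I_24) : dart := ord_of_nat 83 (nth 0 face_table i).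

Definition missing_colour (i : nat) : 'I_4 := ord_of_nat 3 (index 3 (arrangement 3 i)).

Definition face_colouring (i : nat) : {ffun vertex -> 'I_4} :=
  recolour base_colour (arrangement_fun 3 i).

Lemma face_dart_inj (i j : 'I_24) : face (face_dart i) = face (face_dart j) -> i = j.
Proof.
have distinct : forall i j : 'I_24, (face_dart j \in traject gface (face_dart i) 3) ==> (i == j).
  by apply: all_ord_list2; vm_compute.
move=> same_face; apply/eqP/(implyP (distinct i j)).
by rewrite -mem_face same_face mem_face mem_head.
Qed.

Lemma face_base_colours (i : 'I_24) :
  [set base_colour v | v in gvert @: face (face_dart i)] = ~: [set missing_colour i].
Proof.
have avoids : forall i : 'I_24, uniq (missing_colour i ::
    [seq base_colour (gvert y) | y <- traject gface (face_dart i) 3]).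
  by apply: all_ord_list; vm_compute.
rewrite -(set_uniq_setC1 (avoids i)) ?size_map ?size_traject //.
apply/setP => k; rewrite inE; apply/imsetP/mapP => [[_ /imsetP[y y_F ->] ->]|[y y_F ->]].
  by exists y => //; rewrite -mem_face.
by exists (gvert y) => //; apply: imset_f; rewrite mem_face.
Qed.

Lemma face_colouring_face (i : 'I_24) :
  [set face_colouring i v | v in gvert @: face (face_dart i)] = ~: [set ord_max].
Proof.
have lt_i : i < 4`! := ltn_ord i.
rewrite (eq_imset _ (ffunE _)) (imset_comp (arrangement_fun 3 i) base_colour).
by rewrite face_base_colours (imset_setC1 _ (arrangement_fun_inj lt_i)) arrangement_fun_index.
Qed.

Lemma face_colouring_proper (i : 'I_24) : proper_colouring gadj (face_colouring i).
Proof. exact: (recolour_proper base_colour_proper (@arrangement_fun_inj 3 i (ltn_ord i))). Qed.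

Lemma face_colouring_inj (i j : 'I_24) : face_colouring i = face_colouring j -> i = j.
Proof.
move/(recolour_inj base_colour_clique)/arrangement_fun_eq.
by move=> /(_ (ltn_ord i) (ltn_ord j)) /val_inj.
Qed.

Lemma proper_face_colouring (c : {ffun vertex -> 'I_4}) :
  proper_colouring gadj c -> exists i : 'I_24, face_colouring i = c.
Proof.
move=> c_ok.
have [i lt_i arr_c] := arrangement_fun_onto (proper_corner_inj clique_adj c_ok).
exists (Ordinal lt_i); rewrite [RHS](proper_recolourE gstacked c_ok).
by apply/ffunP => v; rewrite !ffunE arr_c.
Qed.

Definition face_phi (F : {set dart}) : {ffun vertex -> 'I_4} :=
  face_colouring (oapp val 0 [pick i : 'I_24 | face (face_dart i) == F]).

Lemma face_phiE (i : 'I_24) : face_phi (face (face_dart i)) = face_colouring i.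
Proof.
rewrite /face_phi; case: pickP => [j /eqP/face_dart_inj -> // | no_face].
by move: (no_face i); rewrite eqxx.
Qed.

Theorem lemma7 :
  exists (V D : finType) (vert : D -> V) (e n f : D -> D),
    plane_triangulation vert e n f /\
    uniquely_4_colourable (adj vert e) /\
    exists (FF : {set {set D}}) (phi : {set D} -> {ffun V -> 'I_4}),
      [/\ FF \subset faces f,
          #|FF| = 24,
          {in FF &, injective phi},
          phi @: FF = [set c | proper_colouring (adj vert e) c] &
          forall F, F \in FF ->
            [set phi F v | v in vert @: F] = ~: [set (ord_max : 'I_4)]].
Proof.
exists vertex, dart, gvert, gedge, gnode, gface.
split; first exact: gtriangulation.
split; first exact: guniquely_4_colourable.
exists [set face (face_dart i) | i : 'I_24], face_phi; split.
- by apply/subsetP => _ /imsetP[i _ ->]; apply: imset_f.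
- by rewrite card_imset; [exact: card_ord | exact: face_dart_inj].
- by move=> _ _ /imsetP[i _ ->] /imsetP[j _ ->]; rewrite !face_phiE => /face_colouring_inj ->.
- apply/setP => c; rewrite inE; apply/imsetP/idP => [[_ /imsetP[i _ ->] ->] | c_ok].
    by rewrite face_phiE; apply: face_colouring_proper.
  have [i <-] := proper_face_colouring c_ok.
  by exists (face (face_dart i)); [apply/imsetP; exists i | rewrite face_phiE].
- by move=> _ /imsetP[i _ ->]; rewrite face_phiE face_colouring_face.
Qed.
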